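(* The image of $\omega:\mathbf{E}\to\mathbf{E}^+$, $\omega(X)=X^\dagger X$, is dense in $\mathbf{E}^+$: any polynomial function on $\mathbf{E}^+$ which vanishes on $\omega(\mathbf{E})$ is identically zero.
   Context: $\Lambda=\varinjlim\wedge(\mathbb{C}^N)$ is the infinite Grassmann algebra ($\mathbb{Z}_2$-graded, supercommutative). $V_{\mathbb{C}}$ is a complex superspace of superdimension $(m|2n)$ with nondegenerate even supersymmetric form, $V=V_{\mathbb{C}}\otimes\Lambda$ with the $\Lambda$-bilinearly extended form. $\mathbf{E}=\mathrm{End}_\Lambda(V)_{\bar0}$; the adjoint $A^\dagger$ is defined by $(Av,w)=(-1)^{[A][v]}(v,A^\dagger w)$; $\mathbf{E}^+=\{A\in\mathbf{E}:A^\dagger=A\}=(\mathrm{End}_{\mathbb{C}}(V_{\mathbb{C}})^+\otimes\Lambda)_{\bar0}$. A polynomial function on $\mathbf{E}^+$ is a function which, in coordinates $\sum_kb_k\lambda_k$ with respect to a homogeneous basis $b_k$ of the self-adjoint endomorphisms of $V_{\mathbb{C}}$, is a finite $\Lambda$-linear combination of monomials in the $\lambda_k$. *)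

From mathcomp Require Import all_boot all_algebra.
From mathcomp Require Import finmap.
From mathcomp Require Import complex.
From mathcomp Require Import Rstruct.

Set Implicit Arguments.
Unset Strict Implicit.
Unset Printing Implicit Defensive.

Import GRing.Theory.
Local Open Scope ring_scope.

Definition C : fieldType := (Rdefinitions.R)[i].

(* Grassmann algebra.  An element is a coefficient function on the    *)
(* Grassmann monomials e_S = e_{s1} ^ ... ^ e_{sk} (s1 < ... < sk),    *)
(* S a finite set of generator indices.  Elements of the infinite      *)
(* Grassmann algebra Lambda = lim_N wedge(C^N) are exactly those       *)
(* coefficient functions whose support only involves generators below  *)
(* some bound N (predicate [gfin]).                                    *)
Notation Lam := ({fset nat} -> C).

Definition gfin (a : Lam) : Prop :=
  exists N : nat, forall S : {fset nat}, a S != 0 -> forall x, x \in S -> (x < N)%N.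

Definition gzero : Lam := fun _ => 0.
Definition gadd (a b : Lam) : Lam := fun S => a S + b S.
Definition gconst (c : C) : Lam := fun S => if S == fset0 then c else 0.

(* number of inversions needed to reorder e_T ^ e_U into e_{T u U} *)
Definition ginv_count (T U : {fset nat}) : nat :=
  (\sum_(t <- enum_fset T) \sum_(u <- enum_fset U) (u < t)%N)%N.

(* the Grassmann product: e_T e_U = (-1)^{inv(T,U)} e_{T u U} if disjoint *)
Definition gmul (a b : Lam) : Lam := fun S =>
  \sum_(T <- enum_fset (fpowerset S))
     (-1) ^+ ginv_count T (S `\` T)%fset * a T * b (S `\` T)%fset.

Definition gprod (s : seq Lam) : Lam := foldr gmul (gconst 1) s.

(* homogeneous of parity q (false = even, true = odd) *)
Definition gpar (q : bool) (a : Lam) : Prop :=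
  forall S : {fset nat}, odd #|` S| != q -> a S = 0.

Definition ginvol (b : bool) (a : Lam) : Lam :=
  fun S => if b then (-1) ^+ #|` S| * a S else a S.

(* The superspace V_C = C^(m|2n): the basis vector e_i has parity      *)
(* [spar m i] (the first m are even, the last 2n odd).                 *)
Definition sdim (m n : nat) : nat := (m + n.*2)%N.
Definition spar (m n : nat) (i : 'I_(sdim m n)) : bool := (m <= i)%N.

Definition even_form m n (G : 'M[C]_(sdim m n)) : Prop :=
  forall i j, spar i != spar j -> G i j = 0.
Definition supersym_form m n (G : 'M[C]_(sdim m n)) : Prop :=
  forall i j, G j i = (-1) ^+ (spar i && spar j) * G i j.
Definition nondeg_form m n (G : 'M[C]_(sdim m n)) : Prop :=
  G \in unitmx.

Definition vecC m n := 'I_(sdim m n) -> C.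
Definition formC m n (G : 'M[C]_(sdim m n)) (v w : vecC m n) : C :=
  \sum_i \sum_j G i j * v i * w j.
Definition actC m n (B : 'M[C]_(sdim m n)) (v : vecC m n) : vecC m n :=
  fun i => \sum_j B i j * v j.
Definition homogC m n (r : bool) (v : vecC m n) : Prop :=
  forall i, spar i != r -> v i = 0.
Definition homogEndC m n (q : bool) (B : 'M[C]_(sdim m n)) : Prop :=
  forall i j, (spar i (+) spar j) != q -> B i j = 0.
Definition selfadjC_hom m n (G : 'M[C]_(sdim m n)) (q : bool) (B : 'M[C]_(sdim m n)) :=
  homogEndC q B /\
  forall (r : bool) (v w : vecC m n), homogC r v ->
    formC G (actC B v) w = (-1) ^+ (q && r) * formC G v (actC B w).
Definition selfadjC m n (G : 'M[C]_(sdim m n)) (B : 'M[C]_(sdim m n)) : Prop :=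
  exists B0 B1, B = B0 + B1 /\ selfadjC_hom G false B0 /\ selfadjC_hom G true B1.

Definition homog_basis_sa m n (G : 'M[C]_(sdim m n)) (K : nat)
    (b : 'I_K -> 'M[C]_(sdim m n)) (q : 'I_K -> bool) : Prop :=
  (forall k, selfadjC_hom G (q k) (b k)) /\
  (forall c : 'I_K -> C, \sum_k c k *: b k = 0 -> forall k, c k = 0) /\
  (forall B, selfadjC G B -> exists c : 'I_K -> C, B = \sum_k c k *: b k).

(* V = V_C (x) Lambda.  A vector is v = sum_i e_i (x) v_i, v : 'I_d -> Lam *)
(* with all v_i in Lambda.  An even Lambda-linear endomorphism X is    *)
(* given by X(e_j (x) 1) = sum_i e_i (x) X i j with X i j of parity    *)
(* p(i)+p(j); then (X v)_i = sum_j X i j v_j.                          *)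
Definition vecL m n := 'I_(sdim m n) -> Lam.
Definition endL m n := 'I_(sdim m n) -> 'I_(sdim m n) -> Lam.

Definition inV m n (v : vecL m n) : Prop := forall i, gfin (v i).

Definition inE m n (X : endL m n) : Prop :=
  forall i j, gfin (X i j) /\ gpar (spar i (+) spar j) (X i j).

Definition actL m n (X : endL m n) (v : vecL m n) : vecL m n :=
  fun i S => \sum_j gmul (X i j) (v j) S.

Definition mulL m n (X Y : endL m n) : endL m n :=
  fun i j S => \sum_k gmul (X i k) (Y k j) S.

(* the Lambda-bilinear extension of the form:                          *)
(* (e_i (x) a, e_j (x) b) = (-1)^{|a| p(j)} (e_i,e_j) a b               *)
Definition formL m n (G : 'M[C]_(sdim m n)) (v w : vecL m n) : Lam :=
  fun S => \sum_i \sum_j G i j * gmul (ginvol (spar j) (v i)) (w j) S.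

Definition is_adjoint m n (G : 'M[C]_(sdim m n)) (X Y : endL m n) : Prop :=
  inE Y /\ forall v w : vecL m n, inV v -> inV w ->
    formL G (actL X v) w = formL G v (actL Y w).

Definition inEplus m n (G : 'M[C]_(sdim m n)) (A : endL m n) : Prop :=
  inE A /\ is_adjoint G A A.

Definition in_omega_image m n (G : 'M[C]_(sdim m n)) (A : endL m n) : Prop :=
  exists X Y : endL m n, inE X /\ is_adjoint G X Y /\ A = mulL Y X.

(* The element sum_k b_k (x) lambda_k of End_C(V_C) (x) Lambda as a matrix: *)
(* (b (x) lam)(e_j (x) 1) = (-1)^{|lam| p(j)} sum_i e_i (x) b i j lam       *)
Definition coordsL m n (K : nat) (b : 'I_K -> 'M[C]_(sdim m n)) (q : 'I_K -> bool)
    (lam : 'I_K -> Lam) : endL m n :=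
  fun i j S => \sum_k (-1) ^+ (q k && spar j) * b k i j * lam k S.

Definition is_coords m n (K : nat) (b : 'I_K -> 'M[C]_(sdim m n)) (q : 'I_K -> bool)
    (A : endL m n) (lam : 'I_K -> Lam) : Prop :=
  (forall k, gfin (lam k) /\ gpar (q k) (lam k)) /\ A = coordsL b q lam.

Definition polyfun m n (G : 'M[C]_(sdim m n)) (K : nat)
    (b : 'I_K -> 'M[C]_(sdim m n)) (q : 'I_K -> bool) (f : endL m n -> Lam) : Prop :=
  exists P : seq (Lam * seq 'I_K),
    (forall cs, List.In cs P -> gfin cs.1) /\
    forall A lam, inEplus G A -> is_coords b q A lam ->
      f A = foldr gadd gzero
              [seq gmul cs.1 (gprod [seq lam k | k <- cs.2]) | cs <- P].

(* Let A be self-adjoint, W := A - 1, let D be the degree of f as a polynomial in the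
   coordinates, and fix d >= max(D, 1).  Pick complex numbers a_0 = 1, a_1, ..., a_d with
   (\sum_p a_p t^p)^2 = 1 + t modulo t^(d+1), a truncated square root of 1 + t, and put
   X(u) := \sum_(p <= d) a_p u^p W^p.  Each X(u) is self-adjoint, so
   X(u)^2 = X(u)^dagger X(u) lies in omega(E), and the coordinates of X(u)^2 agree with
   those of 1 + uW up to multiples of u^(d+1).  The polynomial expression of f evaluated
   at the coordinates of 1 + uW, which are affine in u, is a Lambda-valued polynomial in u
   of degree at most D; it differs from f(X(u)^2) = 0 by a multiple of u^(d+1), hence
   vanishes identically, and u = 1 gives f(A) = 0. *)

From Pilot Require Import Defs.
From mathcomp Require Import all_boot all_algebra.
From mathcomp Require Import finmap.
From mathcomp Require Import complex.
From mathcomp Require Import Rstruct.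
From mathcomp Require Import ring zify.
From Stdlib Require Import FunctionalExtensionality ClassicalEpsilon.

Set Implicit Arguments.
Unset Strict Implicit.
Unset Printing Implicit Defensive.
Import GRing.Theory.
Local Open Scope fset_scope.
Local Open Scope ring_scope.

Implicit Types (a b c : Lam) (S T U V R : {fset nat}).

(** * The Grassmann product *)

Lemma big_fsubset_cond S U (F : {fset nat} -> C) : U `<=` S ->
  \sum_(T <- fpowerset U) F T = \sum_(T <- fpowerset S | T `<=` U) F T.
Proof.
move=> sUS; rewrite -[RHS]big_filter; apply: perm_big.
apply: uniq_perm; [exact: fset_uniq | by rewrite filter_uniq // fset_uniq |].
move=> T; rewrite mem_filter !fpowersetE andb_idr //.
by move/fsubset_trans; apply.
Qed.

Lemma fsetUDKl T V : [disjoint T & V] -> (T `|` V) `\` T = V.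
Proof.
move=> /fdisjointP dTV; apply/fsetP => x; rewrite !inE.
by case: (boolP (x \in T)) => [/dTV /negbTE -> | _] //=; rewrite andbT.
Qed.

Lemma big_fsubset_supset T S (F : {fset nat} -> C) : T `<=` S ->
  \sum_(U <- fpowerset S | T `<=` U) F U = \sum_(V <- fpowerset (S `\` T)) F (T `|` V).
Proof.
move=> sTS; rewrite big_fset_condE.
have -> : [fset U in fpowerset S | T `<=` U] = [fset T `|` V | V in fpowerset (S `\` T)].
  apply/fsetP => U; rewrite !inE fpowersetE; apply/andP/imfsetP => /=.
    case=> sUS sTU; exists (U `\` T); first by rewrite fpowersetE fsetSD.
    by rewrite fsetUDl fsetDv fsetD0; apply/esym/fsetUidPr.
  case=> V; rewrite fpowersetE fsubsetD => /andP[sVS dVT] ->.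
  by rewrite fsubUset sTS sVS fsubsetUl.
rewrite big_imfset //= => V1 V2; rewrite !fpowersetE !fsubsetD !(fdisjoint_sym _ T).
move=> /andP[_ d1] /andP[_ d2] e.
by rewrite -(fsetUDKl d1) -(fsetUDKl d2) e.
Qed.

Definition sg T U : C := (-1) ^+ ginv_count T U.

Lemma gmulE a b S :
  gmul a b S = \sum_(T <- fpowerset S) sg T (S `\` T) * a T * b (S `\` T).
Proof. by []. Qed.

Lemma sumn_fsetU T V (F : nat -> nat) : [disjoint T & V] ->
  (\sum_(x <- T `|` V) F x = \sum_(x <- T) F x + \sum_(x <- V) F x)%N.
Proof.
move=> /fdisjointP dTV; rewrite -big_cat; apply: perm_big; apply: uniq_perm.
- exact: fset_uniq.
- rewrite cat_uniq !fset_uniq /= andbT; apply/hasPn => x xV.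
  by apply/negP => /dTV; rewrite xV.
- by move=> x; rewrite mem_cat in_fsetU.
Qed.

Lemma sgUl T V R : [disjoint T & V] -> sg (T `|` V) R = sg T R * sg V R.
Proof. by move=> dTV; rewrite /sg -exprD /ginv_count sumn_fsetU. Qed.

Lemma sgUr T V R : [disjoint V & R] -> sg T (V `|` R) = sg T V * sg T R.
Proof.
move=> dVR; rewrite /sg -exprD /ginv_count -big_split /=.
by congr (_ ^+ _); apply: eq_bigr => t _; rewrite sumn_fsetU.
Qed.

Lemma sg0l U : sg fset0 U = 1.
Proof. by rewrite /sg /ginv_count big_seq_fset0. Qed.

Lemma sg0r T : sg T fset0 = 1.
Proof. by rewrite /sg /ginv_count big1 // => t _; rewrite big_seq_fset0. Qed.

Lemma sg_cocycle T V R : [disjoint T & V] -> [disjoint V & R] ->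
  sg (T `|` V) R * sg T V = sg T (V `|` R) * sg V R.
Proof. by move=> dTV dVR; rewrite sgUl // sgUr //; ring. Qed.

Lemma gmulA a b c S : gmul (gmul a b) c S = gmul a (gmul b c) S.
Proof.
transitivity (\sum_(U <- fpowerset S) \sum_(T <- fpowerset S | T `<=` U)
    sg U (S `\` U) * sg T (U `\` T) * a T * b (U `\` T) * c (S `\` U)).
  rewrite gmulE big_seq [RHS]big_seq; apply: eq_bigr => U; rewrite fpowersetE => sUS.
  rewrite gmulE (big_fsubset_cond _ sUS) mulr_sumr mulr_suml.
  by apply: eq_bigr => T _; rewrite !mulrA.
rewrite (exchange_big_dep xpredT) //= gmulE big_seq [RHS]big_seq.
apply: eq_bigr => T; rewrite fpowersetE => sTS.
rewrite (big_fsubset_supset _ sTS) gmulE mulr_sumr big_seq [RHS]big_seq.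
apply: eq_bigr => V; rewrite fpowersetE fsubsetD => /andP[sVS dVT].
have dTV : [disjoint T & V] by rewrite fdisjoint_sym.
have dVR : [disjoint V & (S `\` T) `\` V] by apply/fdisjointP => x xV; rewrite !inE xV.
have eST : S `\` T = V `|` ((S `\` T) `\` V).
  by rewrite fsetUDl fsetDv fsetD0; apply/esym/fsetUidPr; rewrite fsubsetD sVS.
rewrite fsetUDKl // -fsetDDl; have := sg_cocycle dTV dVR; rewrite -eST => e.
transitivity (sg (T `|` V) (S `\` T `\` V) * sg T V * a T * (b V * c (S `\` T `\` V))).
  by rewrite !mulrA.
by rewrite e; ring.
Qed.

Lemma gmul_constl k a S : gmul (gconst k) a S = k * a S.
Proof.
rewrite gmulE (bigD1_seq fset0) ?fpowersetE ?fsub0set ?fset_uniq //=.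
rewrite big1 => [|T /negbTE nT0]; last by rewrite /gconst nT0 mulr0 mul0r.
by rewrite sg0l fsetD0 /gconst eqxx mul1r addr0.
Qed.

Lemma gmul_constr k a S : gmul a (gconst k) S = k * a S.
Proof.
rewrite gmulE (bigD1_seq S) ?fpowersetE ?fsubset_refl ?fset_uniq //=.
rewrite big_seq_cond big1 => [|T /andP[]]; last first.
  rewrite fpowersetE => sTS nTS; rewrite /gconst fsetD_eq0.
  rewrite (_ : S `<=` T = false) ?mulr0 //.
  by apply: contraNF nTS => sST; rewrite eqEfsubset sTS.
by rewrite fsetDv sg0r /gconst eqxx mul1r addr0 mulrC.
Qed.

Lemma gmul_suml (I : Type) (r : seq I) (F : I -> Lam) b S :
  gmul (fun T => \sum_(i <- r) F i T) b S = \sum_(i <- r) gmul (F i) b S.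
Proof.
rewrite gmulE exchange_big; apply: eq_bigr => T _.
by rewrite mulr_sumr mulr_suml.
Qed.

Lemma gmul_sumr (I : Type) (r : seq I) (F : I -> Lam) a S :
  gmul a (fun T => \sum_(i <- r) F i T) S = \sum_(i <- r) gmul a (F i) S.
Proof. by rewrite gmulE exchange_big; apply: eq_bigr => T _; rewrite mulr_sumr. Qed.

Lemma gmul_scalel k a b S : gmul (fun T => k * a T) b S = k * gmul a b S.
Proof. by rewrite !gmulE mulr_sumr; apply: eq_bigr => T _ /=; ring. Qed.

Lemma gmul_scaler k a b S : gmul a (fun T => k * b T) S = k * gmul a b S.
Proof. by rewrite !gmulE mulr_sumr; apply: eq_bigr => T _ /=; ring. Qed.

Lemma gmul_addl a a' b S : gmul (fun T => a T + a' T) b S = gmul a b S + gmul a' b S.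
Proof. by rewrite !gmulE -big_split; apply: eq_bigr => T _ /=; ring. Qed.

Lemma gmul_addr a b b' S : gmul a (fun T => b T + b' T) S = gmul a b S + gmul a b' S.
Proof. by rewrite !gmulE -big_split; apply: eq_bigr => T _ /=; ring. Qed.

Lemma gmul_subl a a' b S : gmul (fun T => a T - a' T) b S = gmul a b S - gmul a' b S.
Proof. by rewrite !gmulE -sumrB; apply: eq_bigr => T _ /=; ring. Qed.

Lemma gmul_subr a b b' S : gmul a (fun T => b T - b' T) S = gmul a b S - gmul a b' S.
Proof. by rewrite !gmulE -sumrB; apply: eq_bigr => T _ /=; ring. Qed.

Lemma gmul_neq0 a b S : gmul a b S != 0 ->
  exists2 T, T `<=` S & (a T != 0) && (b (S `\` T) != 0).
Proof.
rewrite gmulE => nz.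
have /hasP[T] : has (fun T => (a T != 0) && (b (S `\` T) != 0)) (fpowerset S).
  apply: contraNT nz => /hasPn h; rewrite big_seq big1 // => T /h.
  by rewrite negb_and !negbK => /orP[] /eqP ->; rewrite ?mulr0 ?mul0r.
by rewrite fpowersetE; exists T.
Qed.

Lemma gpar_mul p p' a b : gpar p a -> gpar p' b -> gpar (p (+) p') (gmul a b).
Proof.
move=> pa pb S hS; apply/eqP; apply: contraNT hS => /gmul_neq0 [T sTS /andP[aT bT]].
rewrite -(cardfsID T S) (fsetIidPr sTS) oddD.
have /eqP-> : odd #|` T| == p by apply: contraR aT => /pa ->; rewrite eqxx.
by have /eqP-> : odd #|` S `\` T| == p' by apply: contraR bT => /pb ->; rewrite eqxx.
Qed.

Lemma gpar_lin p k a k' a' : gpar p a -> gpar p a' ->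
  gpar p (fun S => k * a S + k' * a' S).
Proof. by move=> h h' S hS; rewrite h // h' // !mulr0 addr0. Qed.

Lemma gpar_sum p (I : Type) (r : seq I) (F : I -> Lam) :
  (forall i, gpar p (F i)) -> gpar p (fun S => \sum_(i <- r) F i S).
Proof. by move=> h S hS; rewrite big1 // => i _; rewrite h. Qed.

Lemma gpar_const k : gpar false (gconst k).
Proof. by move=> S; rewrite /gconst; case: (S =P fset0) => [->|//]; rewrite cardfs0. Qed.

Lemma gfin_mul a b : gfin a -> gfin b -> gfin (gmul a b).
Proof.
move=> [Na ha] [Nb hb]; exists (maxn Na Nb) => S /gmul_neq0 [T sTS /andP[aT bT]] x xS.
rewrite leq_max; case: (boolP (x \in T)) => xT; first by rewrite (ha _ aT x xT).
by rewrite (hb _ bT x) ?orbT // !inE xT.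
Qed.

Lemma gfin_lin k a k' a' : gfin a -> gfin a' -> gfin (fun S => k * a S + k' * a' S).
Proof.
move=> [N h] [N' h']; exists (maxn N N') => S hS x xS; rewrite leq_max.
have [aS|/negPn/eqP aS0] := boolP (a S != 0); first by rewrite (h _ aS x xS).
have [aS'|/negPn/eqP aS'0] := boolP (a' S != 0); first by rewrite (h' _ aS' x xS) orbT.
by move: hS; rewrite aS0 aS'0 !mulr0 addr0 eqxx.
Qed.

Lemma gfin_const k : gfin (gconst k).
Proof.
by exists 0%N => S; rewrite /gconst; case: (S =P fset0) => [-> _ x|_]; rewrite ?inE ?eqxx.
Qed.

Lemma gfin_sum (I : Type) (r : seq I) (F : I -> Lam) :
  (forall i, gfin (F i)) -> gfin (fun S => \sum_(i <- r) F i S).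
Proof.
move=> h; elim: r => [|i r IH].
  by exists 0%N => S; rewrite big_nil eqxx.
have := gfin_lin 1 1 (h i) IH.
by congr gfin; apply: functional_extensionality => S; rewrite big_cons !mul1r.
Qed.

Lemma sum_delta (R : pzSemiRingType) (I : finType) (i : I) (x : I -> R) :
  \sum_k (k == i)%:R * x k = x i.
Proof.
rewrite (bigD1 i) //= eqxx mul1r big1 ?addr0 // => k /negbTE ->.
by rewrite mul0r.
Qed.

(** * Even endomorphisms and adjoints *)

(* MathComp's [inE] rewrite rule shadows [Defs.inE]. *)
Notation inEnd := Defs.inE.

Section Endomorphisms.
Variables (m n : nat).
Implicit Types (X Y Z W : endL m n) (v w : vecL m n).

Lemma endL_ext X Y : (forall i j S, X i j S = Y i j S) -> X = Y.
Proof.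
move=> h; do 3![apply: functional_extensionality => ?]; exact: h.
Qed.

Lemma vecL_ext v w : (forall i S, v i S = w i S) -> v = w.
Proof. by move=> h; do 2![apply: functional_extensionality => ?]; exact: h. Qed.

Definition idL : endL m n := fun i j => gconst (i == j)%:R.
Definition linL (k : C) X (k' : C) Y : endL m n := fun i j S => k * X i j S + k' * Y i j S.
Definition powL W (p : nat) : endL m n := iter p (mulL W) idL.
Definition linV (k : C) v (k' : C) w : vecL m n := fun i S => k * v i S + k' * w i S.

Lemma mulLA X Y Z : mulL (mulL X Y) Z = mulL X (mulL Y Z).
Proof.
apply: endL_ext => i j S; rewrite /mulL.
under eq_bigr do rewrite gmul_suml.
rewrite exchange_big /=; apply: eq_bigr => l _.
by rewrite gmul_sumr; apply: eq_bigr => k _; apply: gmulA.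
Qed.

Lemma mul1L X : mulL idL X = X.
Proof.
apply: endL_ext => i j S; rewrite /mulL /idL.
by under eq_bigr do rewrite gmul_constl eq_sym; rewrite sum_delta.
Qed.

Lemma mulL1 X : mulL X idL = X.
Proof.
apply: endL_ext => i j S; rewrite /mulL /idL.
by under eq_bigr do rewrite gmul_constr; rewrite sum_delta.
Qed.

Lemma powLD W p p' : powL W (p + p') = mulL (powL W p) (powL W p').
Proof.
elim: p => [|p IH]; first by rewrite add0n mul1L.
by rewrite addSn /powL !iterS -!/(powL _ _) IH mulLA.
Qed.

Lemma powLSr W p : powL W p.+1 = mulL (powL W p) W.
Proof. by rewrite -addn1 powLD /powL /= mulL1. Qed.

Lemma inE_id : inEnd idL.
Proof.
move=> i j; split; first exact: gfin_const.
case: (i =P j) => [->|/eqP ij]; first by rewrite addbb; apply: gpar_const.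
by move=> S _; rewrite /idL /gconst (negbTE ij) if_same.
Qed.

Lemma inE_lin k X k' Y : inEnd X -> inEnd Y -> inEnd (linL k X k' Y).
Proof.
move=> hX hY i j; have [fX pX] := hX i j; have [fY pY] := hY i j.
by split; [apply: gfin_lin | apply: gpar_lin].
Qed.

Lemma inE_mul X Y : inEnd X -> inEnd Y -> inEnd (mulL X Y).
Proof.
move=> hX hY i j; split.
  by apply: gfin_sum => k; apply: gfin_mul; [exact: (hX i k).1 | exact: (hY k j).1].
apply: gpar_sum => k; have := gpar_mul (hX i k).2 (hY k j).2.
by rewrite addbA -(addbA (spar i)) addbb addbF.
Qed.

Lemma inE_pow W p : inEnd W -> inEnd (powL W p).
Proof. by move=> h; elim: p => [|p IH]; [exact: inE_id | exact: inE_mul]. Qed.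

Lemma actL_mul X Y v : actL (mulL X Y) v = actL X (actL Y v).
Proof.
apply: vecL_ext => i S; rewrite /actL /mulL.
under eq_bigr do rewrite gmul_suml.
rewrite exchange_big /=; apply: eq_bigr => l _.
by rewrite gmul_sumr; apply: eq_bigr => k _; apply: gmulA.
Qed.

Lemma actL_id v : actL idL v = v.
Proof.
apply: vecL_ext => i S; rewrite /actL /idL.
by under eq_bigr do rewrite gmul_constl eq_sym; rewrite sum_delta.
Qed.

Lemma actL_lin k X k' Y v : actL (linL k X k' Y) v = linV k (actL X v) k' (actL Y v).
Proof.
apply: vecL_ext => i S; rewrite /actL /linL /linV !mulr_sumr -big_split.
by apply: eq_bigr => l _ /=; rewrite gmul_addl gmul_scalel (gmul_scalel k').
Qed.

Lemma inV_act X v : inEnd X -> inV v -> inV (actL X v).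
Proof.
by move=> hX hv i; apply: gfin_sum => j; apply: gfin_mul; [exact: (hX i j).1 | exact: hv].
Qed.

Variable G : 'M[C]_(sdim m n).

Lemma formL_linl k v k' v' w S :
  formL G (linV k v k' v') w S = k * formL G v w S + k' * formL G v' w S.
Proof.
rewrite /formL !mulr_sumr -big_split; apply: eq_bigr => i _ /=.
rewrite !mulr_sumr -big_split; apply: eq_bigr => j _ /=.
have -> : ginvol (spar j) (linV k v k' v' i) =
    fun T => k * ginvol (spar j) (v i) T + k' * ginvol (spar j) (v' i) T.
  by apply: functional_extensionality => T; rewrite /ginvol /linV; case: spar => //; ring.
by rewrite gmul_addl gmul_scalel (gmul_scalel k'); ring.
Qed.

Lemma formL_linr k v k' v' w S :
  formL G w (linV k v k' v') S = k * formL G w v S + k' * formL G w v' S.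
Proof.
rewrite /formL !mulr_sumr -big_split; apply: eq_bigr => i _ /=.
rewrite !mulr_sumr -big_split; apply: eq_bigr => j _ /=.
by rewrite gmul_addr gmul_scaler (gmul_scaler k'); ring.
Qed.

Lemma adjoint_id : is_adjoint G idL idL.
Proof. by split; [exact: inE_id | move=> v w _ _; rewrite !actL_id]. Qed.

Lemma adjoint_lin k X X' k' Y Y' : is_adjoint G X X' -> is_adjoint G Y Y' ->
  is_adjoint G (linL k X k' Y) (linL k X' k' Y').
Proof.
move=> [hX eX] [hY eY]; split; first exact: inE_lin.
move=> v w hv hw; rewrite !actL_lin; apply: functional_extensionality => S.
by rewrite formL_linl formL_linr eX ?eY.
Qed.

Lemma adjoint_mul X X' Y Y' : inEnd X -> inEnd Y ->
  is_adjoint G X X' -> is_adjoint G Y Y' -> is_adjoint G (mulL X Y) (mulL Y' X').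
Proof.
move=> iX iY [hX eX] [hY eY]; split; first exact: inE_mul.
by move=> v w hv hw; rewrite !actL_mul eX ?eY //; apply: inV_act.
Qed.

Lemma adjoint_pow W p : inEnd W -> is_adjoint G W W -> is_adjoint G (powL W p) (powL W p).
Proof.
move=> iW aW; elim: p => [|p IH]; first exact: adjoint_id.
rewrite {2}powLSr; apply: adjoint_mul => //; exact: inE_pow.
Qed.

End Endomorphisms.
Arguments idL {m n}.

Lemma gfin_family (I : finType) (F : I -> Lam) : (forall i, gfin (F i)) ->
  exists N, forall i S, F i S != 0 -> forall x, x \in S -> (x < N)%N.
Proof.
move=> hF; pose N i := proj1_sig (constructive_indefinite_description _ (hF i)).
exists (\max_i N i) => i S hS x xS.
apply: leq_trans (leq_bigmax i).
exact: (proj2_sig (constructive_indefinite_description _ (hF i))) S hS x xS.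
Qed.

Lemma ginvol_const p k : ginvol p (gconst k) = gconst k.
Proof.
apply: functional_extensionality => S; rewrite /ginvol /gconst.
by case: p => //; case: (S =P fset0) => [->|_]; rewrite ?cardfs0 ?expr0 ?mul1r ?mulr0.
Qed.

(** * Coordinates with respect to a homogeneous basis *)

Section Forms.
Variables (m n : nat) (G : 'M[C]_(sdim m n)).

Definition basisV (k : 'I_(sdim m n)) : vecL m n := fun i => gconst (i == k)%:R.

Lemma inV_basisV k : inV (basisV k).
Proof. by move=> i; apply: gfin_const. Qed.

Lemma actL_basisV (A : endL m n) k : actL A (basisV k) = fun i => A i k.
Proof.
apply: vecL_ext => i S; rewrite /actL /basisV.
by under eq_bigr do rewrite gmul_constr; rewrite sum_delta.
Qed.

Lemma formL_basisVr (v : vecL m n) l S :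
  formL G v (basisV l) S = \sum_i G i l * ginvol (spar l) (v i) S.
Proof.
rewrite /formL; apply: eq_bigr => i _; rewrite /basisV.
by under eq_bigr do rewrite gmul_constr mulrCA; rewrite sum_delta.
Qed.

Lemma formL_basisVl (w : vecL m n) k S :
  formL G (basisV k) w S = \sum_j G k j * w j S.
Proof.
rewrite /formL /basisV; under eq_bigr do under eq_bigr do
  rewrite ginvol_const gmul_constl mulrCA.
by under eq_bigr do rewrite -mulr_sumr; rewrite sum_delta.
Qed.

Lemma adjoint_entries (A : endL m n) : is_adjoint G A A -> forall k l S,
  \sum_i G i l * ginvol (spar l) (A i k) S = \sum_j G k j * A j l S.
Proof.
move=> [_ h] k l S; have := h _ _ (inV_basisV k) (inV_basisV l).
by rewrite !actL_basisV => e; rewrite -formL_basisVr e formL_basisVl.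
Qed.

Lemma formC_actl (B : 'M[C]_(sdim m n)) (v w : vecC m n) :
  Defs.formC G (actC B v) w = \sum_k \sum_l (\sum_i G i l * B i k) * v k * w l.
Proof.
rewrite /Defs.formC /actC.
transitivity (\sum_i \sum_l \sum_k G i l * B i k * v k * w l).
  apply: eq_bigr => i _; apply: eq_bigr => l _.
  by rewrite mulr_sumr mulr_suml; apply: eq_bigr => k _; rewrite !mulrA.
rewrite exchange_big /=; under eq_bigr do rewrite exchange_big /=.
rewrite exchange_big /=; apply: eq_bigr => k _; apply: eq_bigr => l _.
by rewrite !mulr_suml.
Qed.

Lemma formC_actr (B : 'M[C]_(sdim m n)) (v w : vecC m n) :
  Defs.formC G v (actC B w) = \sum_k \sum_l (\sum_j G k j * B j l) * v k * w l.
Proof.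
rewrite /Defs.formC /actC; apply: eq_bigr => k _.
transitivity (\sum_j \sum_l G k j * v k * (B j l * w l)).
  by apply: eq_bigr => j _; rewrite mulr_sumr.
rewrite exchange_big /=; apply: eq_bigr => l _.
by rewrite !mulr_suml; apply: eq_bigr => j _; ring.
Qed.

Lemma selfadjC_hom0 p : selfadjC_hom G p 0.
Proof.
split=> [i j _|r v w _]; first by rewrite mxE.
rewrite formC_actl formC_actr mulr_sumr; apply: eq_bigr => k _.
rewrite mulr_sumr; apply: eq_bigr => l _.
by rewrite !big1 ?mul0r ?mulr0 // => i _; rewrite mxE ?mulr0 ?mul0r.
Qed.

Lemma selfadjC_hom_selfadjC p B : selfadjC_hom G p B -> selfadjC G B.
Proof.
case: p => hB.
  by exists 0, B; rewrite add0r; split=> //; split=> //; apply: selfadjC_hom0.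
by exists B, 0; rewrite addr0; split=> //; split=> //; apply: selfadjC_hom0.
Qed.

End Forms.

Section Coordinates.
Variables (m n : nat) (G : 'M[C]_(sdim m n)) (K : nat).
Variables (b : 'I_K -> 'M[C]_(sdim m n)) (q : 'I_K -> bool).
Hypothesis hb : homog_basis_sa G b q.

Lemma basis_coef_homog p (B : 'M[C]_(sdim m n)) (c : 'I_K -> C) :
  homogEndC p B -> B = \sum_k c k *: b k -> forall k, q k != p -> c k = 0.
Proof.
move=> hB eB.
have hbk k : homogEndC (q k) (b k) by exact: (hb.1 k).1.
suff /hb.2.1 h : \sum_k (if q k != p then c k else 0) *: b k = 0.
  by move=> k hk; move: (h k); rewrite hk.
apply/matrixP => i j; rewrite summxE mxE.
have [/eqP hij|hij] := boolP ((spar i (+) spar j) == p).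
  rewrite big1 // => k _; case: ifP => hk; last by rewrite mxE mul0r.
  by rewrite mxE hbk ?mulr0 // hij eq_sym.
have : B i j = 0 by rewrite hB.
rewrite eB summxE (bigID (fun k => q k != p)) /= [X in _ + X]big1 ?addr0 => [e|k].
  rewrite -[RHS]e [RHS]big_mkcond; apply: eq_bigr => k _.
  by rewrite !mxE; case: ifP; rewrite ?mul0r.
by rewrite negbK => /eqP hk; rewrite mxE hbk ?mulr0 // hk.
Qed.

Variable A : endL m n.
Hypothesis hA : inEplus G A.

(* The [e_S]-component of [A] with the column signs of [coordsL] removed: a
   homogeneous self-adjoint endomorphism of [V_C], hence a combination of the [b k]. *)
Definition slice S : 'M[C]_(sdim m n) :=
  \matrix_(i, j) ((-1) ^+ (odd #|` S| && spar j) * A i j S).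

Lemma slice_homog S : selfadjC_hom G (odd #|` S|) (slice S).
Proof.
have [iA aA] := hA; split=> [i j hij|r v w hv].
  by rewrite mxE (iA i j).2 ?mulr0 // eq_sym.
rewrite formC_actl formC_actr mulr_sumr; apply: eq_bigr => k _.
rewrite mulr_sumr; apply: eq_bigr => l _.
have [/eqP <-|hk] := boolP (spar k == r); last by rewrite hv // !(mulr0, mul0r).
rewrite !mulrA; congr (_ * _ * _).
under eq_bigr do rewrite mxE mulrCA.
under [in RHS]eq_bigr do rewrite mxE mulrCA.
rewrite -!mulr_sumr -(adjoint_entries aA k l S) /ginvol.
case: (spar l); rewrite ?andbF ?andbT ?expr0 ?mul1r //.
rewrite -[(-1) ^+ #|` S|]signr_odd; under [in RHS]eq_bigr do rewrite mulrCA.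
by rewrite -mulr_sumr mulrA -signr_addb addbb expr0 mul1r.
Qed.

Lemma slice_coef S : exists c : 'I_K -> C, slice S = \sum_k c k *: b k.
Proof. exact: hb.2.2 _ (selfadjC_hom_selfadjC (slice_homog S)). Qed.

Definition slice_coords (k : 'I_K) : Lam := fun S =>
  proj1_sig (constructive_indefinite_description _ (slice_coef S)) k.

Lemma sliceE S : slice S = \sum_k slice_coords k S *: b k.
Proof. exact: proj2_sig (constructive_indefinite_description _ (slice_coef S)). Qed.

Lemma gpar_slice_coords k : gpar (q k) (slice_coords k).
Proof.
move=> S hS; apply: (basis_coef_homog (slice_homog S).1 (sliceE S)).
by rewrite eq_sym.
Qed.

Lemma gfin_slice_coords k : gfin (slice_coords k).
Proof.
pose I := ('I_(sdim m n) * 'I_(sdim m n))%type.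
have [N hN] := gfin_family (fun ij : I => (hA.1 ij.1 ij.2).1).
exists N => S hS x xS.
have [[i j] /= hij|] := pickP (fun ij : I => A ij.1 ij.2 S != 0).
  exact: hN (i, j) S hij x xS.
move=> h0; suff slice0 : slice S = 0.
  by move: hS; rewrite (hb.2.1 _ (etrans (esym (sliceE S)) slice0)) eqxx.
apply/matrixP => i j; rewrite !mxE.
by move/negbFE/eqP: (h0 (i, j)) => /= ->; rewrite mulr0.
Qed.

Lemma coordsL_slice_coords : A = coordsL b q slice_coords.
Proof.
apply: endL_ext => i j S; rewrite /coordsL.
have e : slice S i j = \sum_k slice_coords k S * b k i j.
  by rewrite {1}sliceE summxE; apply: eq_bigr => k _; rewrite mxE.
transitivity ((-1) ^+ (odd #|` S| && spar j) * slice S i j).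
  by rewrite mxE mulrA -signr_addb addbb expr0 mul1r.
rewrite e mulr_sumr; apply: eq_bigr => k _.
have [/eqP -> |hk] := boolP (q k == odd #|` S|); first by ring.
have -> : slice_coords k S = 0 by apply: gpar_slice_coords; rewrite eq_sym.
by rewrite mul0r !mulr0.
Qed.

Lemma is_coords_slice_coords : is_coords b q A slice_coords.
Proof.
split; last exact: coordsL_slice_coords.
by move=> k; split; [apply: gfin_slice_coords | apply: gpar_slice_coords].
Qed.

End Coordinates.

(** * Families depending polynomially on a parameter *)

Implicit Types (F H : C -> Lam).

Definition poly_dvdXn (k : nat) F := exists p : {fset nat} -> {poly C},
  forall S u, F u S = u ^+ k * (p S).[u].

Definition poly_deg_le (D : nat) F := exists2 p : {fset nat} -> {poly C},
  forall S, (size (p S) <= D.+1)%N & forall S u, F u S = (p S).[u].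

Lemma poly_dvdXn_lin k F H (e : C) : poly_dvdXn k F -> poly_dvdXn k H ->
  poly_dvdXn k (fun u S => F u S + e * H u S).
Proof.
move=> [p hp] [p' hp']; exists (fun S => p S + e *: p' S) => S u.
by rewrite hp hp' hornerD hornerZ; ring.
Qed.

Lemma poly_dvdXn_const a : poly_dvdXn 0 (fun=> a).
Proof. by exists (fun S => (a S)%:P) => S u; rewrite hornerC mul1r. Qed.

Lemma poly_dvdXn_mul k k' F H : poly_dvdXn k F -> poly_dvdXn k' H ->
  poly_dvdXn (k + k') (fun u => gmul (F u) (H u)).
Proof.
move=> [p hp] [p' hp'].
exists (fun S => \sum_(T <- fpowerset S) sg T (S `\` T) *: (p T * p' (S `\` T))) => S u.
rewrite gmulE horner_sum mulr_sumr; apply: eq_bigr => T _.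
by rewrite hp hp' hornerZ hornerM exprD; ring.
Qed.

Lemma poly_dvdXn_leq k k' F : (k' <= k)%N -> poly_dvdXn k F -> poly_dvdXn k' F.
Proof.
move=> le_k'k [p hp]; exists (fun S => 'X^(k - k') * p S) => S u.
by rewrite hp hornerM hornerXn mulrA -exprD subnKC.
Qed.

Lemma poly_deg_le_lin D F H (e : C) : poly_deg_le D F -> poly_deg_le D H ->
  poly_deg_le D (fun u S => F u S + e * H u S).
Proof.
move=> [p sp hp] [p' sp' hp']; exists (fun S => p S + e *: p' S) => [S|S u].
  by rewrite (leq_trans (size_polyD _ _)) // geq_max sp (leq_trans (size_scale_leq _ _)).
by rewrite hp hp' hornerD hornerZ.
Qed.

Lemma poly_deg_le_const a : poly_deg_le 0 (fun=> a).
Proof. by exists (fun S => (a S)%:P) => [S|S u]; rewrite ?size_polyC ?leq_b1 ?hornerC. Qed.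

Lemma poly_deg_le_leq D D' F : (D <= D')%N -> poly_deg_le D F -> poly_deg_le D' F.
Proof. by move=> le_DD' [p sp hp]; exists p => // S; apply: leq_trans (sp S) _. Qed.

Lemma poly_deg_le_mul D D' F H : poly_deg_le D F -> poly_deg_le D' H ->
  poly_deg_le (D + D') (fun u => gmul (F u) (H u)).
Proof.
move=> [p sp hp] [p' sp' hp'].
exists (fun S => \sum_(T <- fpowerset S) sg T (S `\` T) *: (p T * p' (S `\` T))).
  move=> S; apply: (leq_trans (size_sum _ _ _)); apply/bigmax_leqP_seq => T _ _.
  apply: (leq_trans (size_scale_leq _ _)); apply: (leq_trans (size_polyMleq _ _)).
  by have := sp T; have := sp' (S `\` T); lia.
move=> S u; rewrite gmulE horner_sum; apply: eq_bigr => T _.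
by rewrite hp hp' hornerZ hornerM mulrA.
Qed.

Lemma poly_deg_le_affine a a' : poly_deg_le 1 (fun u S => a S + u * a' S).
Proof.
exists (fun S => (a S)%:P + a' S *: 'X) => [S|S u].
  rewrite (leq_trans (size_polyD _ _)) // geq_max size_polyC.
  by rewrite (leq_trans (size_scale_leq _ _)) ?size_polyX // andbT; case: (_ != 0).
by rewrite hornerD hornerC hornerZ hornerX mulrC.
Qed.

Lemma horner_eq0_poly (p : {poly C}) : (forall u, p.[u] = 0) -> p = 0.
Proof.
move=> h; apply/eqP; apply: contraT => nz_p.
have := max_poly_roots nz_p (rs := [seq i%:R | i <- iota 0 (size p)]).
rewrite size_map size_iota ltnn; apply; first by apply/allP => x _; rewrite /root h.
by rewrite map_inj_uniq ?iota_uniq // => i j /eqP; rewrite Num.Theory.eqr_nat => /eqP.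
Qed.

Lemma poly_deg_le_dvdXn_eq0 D F H : poly_deg_le D H ->
  poly_dvdXn D.+1 (fun u S => F u S - H u S) -> (forall u S, F u S = 0) ->
  forall u S, H u S = 0.
Proof.
move=> [ph sh eh] [pr er] F0 u S.
have e : ph S + 'X^(D.+1) * pr S = 0.
  apply: horner_eq0_poly => v; move: (er S v); rewrite F0 eh sub0r => e.
  by rewrite hornerD hornerM hornerXn -e -eh addrN.
have [pr0|nz_pr] := eqVneq (pr S) 0.
  by move: e; rewrite pr0 mulr0 addr0 => e; rewrite eh e horner0.
exfalso; have := sh S; rewrite (_ : ph S = - ('X^(D.+1) * pr S)); last first.
  by apply/eqP; rewrite -addr_eq0 e.
rewrite size_polyN mulrC size_mulXn //; move: nz_pr; rewrite -size_poly_gt0 => pos.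
by rewrite -[X in (_ <= X)%N]addn0 leq_add2l leqn0 => /eqP s0; rewrite s0 in pos.
Qed.

Section PolynomialValues.
Variable K : nat.
Implicit Types (P : seq (Lam * seq 'I_K)) (lam : C -> 'I_K -> Lam).

Definition pval P (lam : 'I_K -> Lam) : Lam :=
  foldr gadd gzero [seq gmul cs.1 (gprod [seq lam k | k <- cs.2]) | cs <- P].

Lemma pval_deg_le P lam : (forall k, poly_deg_le 1 (lam^~ k)) ->
  poly_deg_le (\max_(cs <- P) size cs.2) (fun u => pval P (lam u)).
Proof.
move=> hlam; elim: P => [|cs P IH]; first by rewrite big_nil; apply: poly_deg_le_const.
have gprod_deg ks : poly_deg_le (size ks) (fun u => gprod [seq lam u k | k <- ks]).
  elim: ks => [|k ks IHks] /=; first exact: poly_deg_le_const.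
  by rewrite -add1n; apply: poly_deg_le_mul.
have := poly_deg_le_mul (poly_deg_le_const cs.1) (gprod_deg cs.2); rewrite add0n.
move/(poly_deg_le_leq (leq_maxl (size cs.2) (\max_(cs <- P) size cs.2))) => hcs.
have := poly_deg_le_lin 1 hcs (poly_deg_le_leq (leq_maxr _ _) IH).
rewrite big_cons; congr poly_deg_le.
by do 2![apply: functional_extensionality => ?]; rewrite mul1r.
Qed.

Variables (lamF lamH : C -> 'I_K -> Lam) (e : nat).
Hypotheses (polyF : forall k, poly_dvdXn 0 (lamF^~ k))
  (polyH : forall k, poly_dvdXn 0 (lamH^~ k))
  (dvdFH : forall k, poly_dvdXn e (fun u S => lamF u k S - lamH u k S)).

Lemma gprod_dvdXn_sub ks : poly_dvdXn e (fun u S =>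
  gprod [seq lamF u k | k <- ks] S - gprod [seq lamH u k | k <- ks] S).
Proof.
have gprod_poly ks' : poly_dvdXn 0 (fun u => gprod [seq lamF u k | k <- ks']).
  elim: ks' => [|k ks' IH] /=; first exact: poly_dvdXn_const.
  exact: poly_dvdXn_mul (polyF k) IH.
elim: ks => [|k ks IH] /=.
  by exists (fun=> 0) => S u; rewrite subrr horner0 mulr0.
have := poly_dvdXn_mul (dvdFH k) (gprod_poly ks); rewrite addn0 => h1.
have := poly_dvdXn_mul (polyH k) IH; rewrite add0n => h2.
have := poly_dvdXn_lin 1 h1 h2.
congr poly_dvdXn; do 2![apply: functional_extensionality => ?].
by rewrite gmul_subl gmul_subr mul1r addrA subrK.
Qed.

Lemma pval_dvdXn_sub P :
  poly_dvdXn e (fun u S => pval P (lamF u) S - pval P (lamH u) S).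
Proof.
elim: P => [|cs P IH] /=.
  by exists (fun=> 0) => S u; rewrite subrr horner0 mulr0.
have := poly_dvdXn_lin 1 (poly_dvdXn_mul (poly_dvdXn_const cs.1) (gprod_dvdXn_sub cs.2)) IH.
rewrite add0n; congr poly_dvdXn; do 2![apply: functional_extensionality => ?].
by rewrite /pval /= /gadd -!/(pval _ _) gmul_subr; ring.
Qed.

End PolynomialValues.

(** * Square roots of [1 + u W] *)

Lemma trunc_sqrt_coef (d : nat) : exists a : nat -> C, a 0%N = 1 /\
  forall s, (s <= d)%N -> \sum_(i < s.+1) a i * a (s - i)%N = (s == 0%N)%:R + (s == 1%N)%:R.
Proof.
elim: d => [|d [a [a0 ha]]].
  exists (fun i => (i == 0%N)%:R); split => // s; rewrite leqn0 => /eqP ->.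
  by rewrite big_ord1 /= mulr1 addr0.
(* Solve the equation in degree [d+1] for the new coefficient, using [a 0 = 1]. *)
pose mid := \sum_(i < d) a i.+1 * a (d - i)%N.
pose x := ((d.+1 == 1%N)%:R - mid) / 2.
exists (fun i => if i == d.+1 then x else a i); split => // s hs.
have [hsd|] := boolP (s <= d)%N.
  rewrite -ha //; apply: eq_bigr => i _.
  have hi : (i <= d)%N by have := ltn_ord i; lia.
  rewrite (_ : (i : nat) == d.+1 = false); last by apply/negbTE; lia.
  by rewrite (_ : (s - i)%N == d.+1 = false) //; apply/negbTE; lia.
rewrite -ltnNge => hds; have -> : s = d.+1 by lia.
rewrite big_ord_recl big_ord_recr /= subn0 subnn eqxx /=.
rewrite (eq_bigr (fun i : 'I_d => a i.+1 * a (d - i)%N)) => [|i _]; last first.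
  have := ltn_ord i => lt_id.
  rewrite /bump /= add1n subSS (_ : (i.+1 == d.+1) = false); last by apply/negbTE; lia.
  by rewrite (_ : (d - i)%N == d.+1 = false) //; apply/negbTE; lia.
rewrite -/mid a0 /x mul1r mulr1.
have nz2 : (2 : C) != 0 by rewrite Num.Theory.pnatr_eq0.
by field.
Qed.

Lemma sum_ord_delta N s (c : nat -> C) : (s < N)%N ->
  \sum_(j < N) ((j : nat) == s)%:R * c j = c s.
Proof.
move=> hs; rewrite (bigD1 (Ordinal hs)) //= eqxx mul1r big1 ?addr0 // => j hj.
rewrite (_ : ((j : nat) == s) = false) ?mul0r //; apply/negbTE.
by apply: contra hj => /eqP e; apply/eqP/val_inj.
Qed.

Lemma sum_pair_regroup N (h : nat -> nat -> C) (g : nat -> C) :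
  \sum_(p < N) \sum_(p' < N) h p p' * g (p + p')%N =
  \sum_(s < N + N) (\sum_(p < N) \sum_(p' < N) ((p + p')%N == s)%:R * h p p') * g s.
Proof.
transitivity (\sum_(p < N) \sum_(p' < N) \sum_(s < N + N)
    ((s : nat) == (p + p')%N)%:R * (h p p' * g s)).
  apply: eq_bigr => p _; apply: eq_bigr => p' _.
  rewrite (sum_ord_delta (fun s => h p p' * g s)) //.
  by have := ltn_ord p; have := ltn_ord p'; lia.
under eq_bigr do rewrite exchange_big /=.
rewrite exchange_big /=; apply: eq_bigr => s _.
rewrite !mulr_suml; apply: eq_bigr => p _; rewrite mulr_suml; apply: eq_bigr => p' _.
by rewrite eq_sym mulrA.
Qed.

Section Combinations.
Variables (m n : nat) (G : 'M[C]_(sdim m n)) (K : nat).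
Variables (b : 'I_K -> 'M[C]_(sdim m n)) (q : 'I_K -> bool).

Lemma is_coords_sum (I : finType) (w : I -> C) (X : I -> endL m n)
    (lam : I -> 'I_K -> Lam) :
  (forall s, is_coords b q (X s) (lam s)) ->
  is_coords b q (fun i j S => \sum_s w s * X s i j S) (fun k S => \sum_s w s * lam s k S).
Proof.
move=> hX; split=> [k|].
  split; [apply: gfin_sum => s | apply: gpar_sum => s].
    by have := gfin_lin (w s) 0 ((hX s).1 k).1 ((hX s).1 k).1; congr gfin;
      apply: functional_extensionality => S; rewrite mul0r addr0.
  by move=> S hS; rewrite ((hX s).1 k).2 ?mulr0.
apply: endL_ext => i j S; rewrite /coordsL.
under eq_bigr do rewrite (hX _).2 /coordsL mulr_sumr.
rewrite exchange_big /=; apply: eq_bigr => k _; rewrite mulr_sumr.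
by apply: eq_bigr => s _; ring.
Qed.

Definition combL (cf : nat -> C) (N : nat) (W : endL m n) : endL m n :=
  fun i j S => \sum_(p < N) cf p * powL W p i j S.

Lemma combL_recr cf N W : combL cf N.+1 W = linL 1 (combL cf N W) (cf N) (powL W N).
Proof. by apply: endL_ext => i j S; rewrite /combL /linL big_ord_recr /= mul1r. Qed.

Lemma combL0 cf W : combL cf 0 W = linL 0 idL 0 idL.
Proof. by apply: endL_ext => i j S; rewrite /combL /linL big_ord0 !mul0r addr0. Qed.

Lemma inE_combL cf N W : inEnd W -> inEnd (combL cf N W).
Proof.
move=> iW; elim: N => [|N IH]; first by rewrite combL0; apply: inE_lin; apply: inE_id.
by rewrite combL_recr; apply: inE_lin => //; apply: inE_pow.
Qed.

Lemma adjoint_combL cf N W : inEnd W -> is_adjoint G W W ->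
  is_adjoint G (combL cf N W) (combL cf N W).
Proof.
move=> iW aW; elim: N => [|N IH].
  by rewrite combL0; apply: adjoint_lin; apply: adjoint_id.
by rewrite combL_recr; apply: adjoint_lin => //; apply: adjoint_pow.
Qed.

Lemma combL_sqr cf N W i j S : mulL (combL cf N W) (combL cf N W) i j S =
  \sum_(p < N) \sum_(p' < N) (cf p * cf p') * powL W (p + p') i j S.
Proof.
rewrite /mulL /combL.
transitivity (\sum_l \sum_(p < N) \sum_(p' < N)
    cf p * cf p' * gmul (powL W p i l) (powL W p' l j) S).
  apply: eq_bigr => l _; rewrite gmul_suml; apply: eq_bigr => p _.
  rewrite gmul_scalel gmul_sumr mulr_sumr; apply: eq_bigr => p' _.
  by rewrite gmul_scaler mulrA.
rewrite exchange_big /=; apply: eq_bigr => p _.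
rewrite exchange_big /=; apply: eq_bigr => p' _.
by rewrite powLD /mulL mulr_sumr.
Qed.

End Combinations.

Section SquareRoot.
Variables (m n : nat) (G : 'M[C]_(sdim m n)) (K : nat).
Variables (b : 'I_K -> 'M[C]_(sdim m n)) (q : 'I_K -> bool).
Hypothesis hb : homog_basis_sa G b q.
Variable A : endL m n.
Hypothesis hA : inEplus G A.
Variables (a : nat -> C) (d : nat).
(* Otherwise the linear term of [1 + u W] lies beyond the truncation. *)
Hypothesis d_gt0 : (0 < d)%N.
Hypothesis ha : forall s, (s <= d)%N ->
  \sum_(i < s.+1) a i * a (s - i)%N = (s == 0%N)%:R + (s == 1%N)%:R.

Let W := linL 1 A (-1) idL.

Let iW : inEnd W.
Proof. by apply: inE_lin; [exact: hA.1 | exact: inE_id]. Qed.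

Let aW : is_adjoint G W W.
Proof. by apply: adjoint_lin; [exact: hA.2 | exact: adjoint_id]. Qed.

Let powW_Eplus s : inEplus G (powL W s).
Proof. by split; [apply: inE_pow | apply: adjoint_pow]. Qed.

Let L s := slice_coords hb (powW_Eplus s).

Let hL s : is_coords b q (powL W s) (L s).
Proof. exact: is_coords_slice_coords. Qed.

Let N := d.+1.

(* The coefficient of [t^s] in [(\sum_(p < N) a p t^p)^2]. *)
Definition kappa s := \sum_(p < N) \sum_(p' < N) ((p + p')%N == s)%:R * (a p * a p').

Lemma kappa_small s : (s <= d)%N -> kappa s = (s == 0%N)%:R + (s == 1%N)%:R.
Proof.
move=> hs; rewrite -ha // /kappa.
transitivity (\sum_(p < N) if (p <= s)%N then a p * a (s - p)%N else 0).
  apply: eq_bigr => p _; case: ifP => hp; last first.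
    by rewrite big1 // => p' _; rewrite (_ : (p + p')%N == s = false) ?mul0r //; lia.
  rewrite (eq_bigr (fun p' : 'I_N => ((p' : nat) == (s - p)%N)%:R * (a p * a p'))).
    by rewrite (sum_ord_delta (fun p' => a p * a p')) //; lia.
  by move=> p' _; congr (_%:R * _); apply/eqP/eqP; lia.
rewrite (big_ord_widen N (fun i => a i * a (s - i)%N)) ?ltnS // [RHS]big_mkcond.
by apply: eq_bigr => i _; rewrite ltnS.
Qed.

Definition sqrtL (u : C) : endL m n := combL (fun p => a p * u ^+ p) N W.

Definition sqrtL_coords (u : C) (k : 'I_K) : Lam :=
  fun S => \sum_(s < N + N) (kappa s * u ^+ s) * L s k S.

Lemma coords_sqrtL_sqr u : is_coords b q (mulL (sqrtL u) (sqrtL u)) (sqrtL_coords u).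
Proof.
have := is_coords_sum (fun s : 'I_(N + N) => kappa s * u ^+ s) (fun s => hL s).
congr is_coords; apply: endL_ext => i j S; rewrite combL_sqr.
transitivity (\sum_(p < N) \sum_(p' < N)
    (a p * a p') * (u ^+ (p + p') * powL W (p + p') i j S)).
  rewrite (sum_pair_regroup N (fun p p' => a p * a p') (fun s => u ^+ s * powL W s i j S)).
  by apply: eq_bigr => s _; rewrite /kappa mulrA.
by apply: eq_bigr => p _; apply: eq_bigr => p' _; rewrite exprD; ring.
Qed.

Lemma sqrtL_sqr_omega u :
  inEplus G (mulL (sqrtL u) (sqrtL u)) /\ in_omega_image G (mulL (sqrtL u) (sqrtL u)).
Proof.
have iX : inEnd (sqrtL u) by apply: inE_combL.
have aX : is_adjoint G (sqrtL u) (sqrtL u) by apply: adjoint_combL.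
split; last by exists (sqrtL u), (sqrtL u).
by split; [apply: inE_mul | apply: adjoint_mul].
Qed.

(* The coordinates of [1 + u W]. *)
Definition affine_coords (u : C) (k : 'I_K) : Lam := fun S => L 0%N k S + u * L 1%N k S.

Lemma affine_coords_poly k : poly_dvdXn 0 (affine_coords^~ k).
Proof.
exists (fun S => (L 0%N k S)%:P + L 1%N k S *: 'X) => S u.
by rewrite mul1r hornerD hornerC hornerZ hornerX mulrC.
Qed.

Lemma sqrtL_coords_sub_dvdXn k :
  poly_dvdXn N (fun u S => sqrtL_coords u k S - affine_coords u k S).
Proof.
exists (fun S => \sum_(s < N + N | (N <= s)%N) (kappa s * L s k S) *: 'X^(s - N)) => S u.
have low : \sum_(s < N + N | ~~ (N <= s)%N) kappa s * u ^+ s * L s k S =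
    affine_coords u k S.
  rewrite big_mkcond /= (eq_bigr (fun s : 'I_(N + N) => ((s : nat) == 0%N)%:R * L 0%N k S +
    ((s : nat) == 1%N)%:R * (u * L 1%N k S))) => [|s _].
    by rewrite big_split /= (sum_ord_delta (fun=> L 0%N k S))
      ?(sum_ord_delta (fun=> u * L 1%N k S)) // /N addSn addnS.
  case: ifP => hs.
    rewrite kappa_small; last by rewrite -ltnS ltnNge hs.
    by case: (s : nat) => [|[|s']] /=; rewrite ?(addr0, add0r, expr0, expr1, mul1r, mul0r).
  have : (1 < s)%N by move/negbFE: hs; rewrite /N; move: d_gt0; lia.
  by case: (s : nat) => [|[|s']] //= _; rewrite !mul0r addr0.
rewrite /sqrtL_coords (bigID (fun s : 'I_(N + N) => (N <= s)%N)) /= low addrK.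
rewrite horner_sum mulr_sumr; apply: eq_bigr => s hs; rewrite hornerZ hornerXn.
have -> : u ^+ s = u ^+ N * u ^+ (s - N) by rewrite -exprD subnKC.
by ring.
Qed.

Lemma sqrtL_coords_poly k : poly_dvdXn 0 (sqrtL_coords^~ k).
Proof.
have := poly_dvdXn_leq (leq0n _) (sqrtL_coords_sub_dvdXn k).
move/(poly_dvdXn_lin 1 (affine_coords_poly k)).
congr poly_dvdXn; do 2![apply: functional_extensionality => ?].
by rewrite mul1r addrC subrK.
Qed.

Lemma coords_affine : is_coords b q A (affine_coords 1).
Proof.
have := is_coords_sum (fun _ : 'I_2 => 1) (fun s => hL s).
congr is_coords.
  apply: endL_ext => i j S; rewrite !big_ord_recr big_ord0 /= /powL /= mulL1.
  by rewrite /W /linL /idL; ring.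
do 2![apply: functional_extensionality => ?].
by rewrite !big_ord_recr big_ord0 /= /affine_coords; ring.
Qed.

Lemma pval_affine_coords_eq0 (P : seq (Lam * seq 'I_K)) :
  (\max_(cs <- P) size cs.2 <= d)%N -> (forall u, pval P (sqrtL_coords u) = gzero) ->
  pval P (affine_coords 1) = gzero.
Proof.
move=> degP F0; apply: functional_extensionality => S.
have degH := pval_deg_le P (fun k => poly_deg_le_affine (L 0%N k) (L 1%N k)).
have dvdFH := pval_dvdXn_sub sqrtL_coords_poly affine_coords_poly sqrtL_coords_sub_dvdXn P.
have degP' : (\max_(cs <- P) size cs.2 < N)%N by rewrite ltnS.
apply: (poly_deg_le_dvdXn_eq0 degH (poly_dvdXn_leq degP' dvdFH)) => u S'.
by rewrite F0.
Qed.

End SquareRoot.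

Theorem lemma6p5 (m n : nat) (G : 'M[C]_(sdim m n)) (K : nat)
    (b : 'I_K -> 'M[C]_(sdim m n)) (q : 'I_K -> bool) (f : endL m n -> Lam) :
  even_form G -> supersym_form G -> nondeg_form G ->
  homog_basis_sa G b q ->
  polyfun G b q f ->
  (forall A : endL m n, inEplus G A -> in_omega_image G A -> f A = gzero) ->
  forall A : endL m n, inEplus G A -> f A = gzero.
Proof.
move=> _ _ _ hb [P [_ hP]] f0 A hA.
pose d := (\max_(cs <- P) size cs.2).+1.
have [a [_ ha]] := trunc_sqrt_coef d.
rewrite (hP A _ hA (coords_affine hb hA)).
apply: (pval_affine_coords_eq0 (a := a) (ltn0Sn _) ha (leqnSn _)) => u.
have [sqrE sqrO] := sqrtL_sqr_omega hA a d u.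
by rewrite /pval -(hP _ _ sqrE (coords_sqrtL_sqr hb hA a d u)) f0.
Qed.
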